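(* Let $(R,\mathfrak{m})$ be a Noetherian local ring and let $I$ be an ideal of $R$. Let $x_1,\ldots,x_s,y$ be a minimal generating set of $I$, where $J=(x_1,\ldots,x_s)$ is a reduction of $I$ with reduction number $r=\mathrm{r}_J(I)$. Assume that (a) $x_1,\ldots,x_s$ is a $d$-sequence, and (b) $(x_1,\ldots,x_i)\cap I^{r+1}=(x_1,\ldots,x_i)I^r$ for all $i=1,\ldots,s-1$. Then $\mathrm{rt}(I)\leq \mathrm{r}_J(I)+1$. Suppose in addition that (c) $x_1,\ldots,x_s$ is an $R$-sequence and (d) $(x_1,\ldots,x_i)\cap I^{r}=(x_1,\ldots,x_i)I^{r-1}$ for all $i=1,\ldots,s-1$. Then $\mathrm{rt}(I)=\mathrm{r}_J(I)+1$ and there is a form $Y^{r+1}-\sum_{i=1}^s X_iF_i\in Q_{r+1}$, with $F_i\in V_r$, such that $Q=(Y^{r+1}-\sum_iX_iF_i)+Q\langle r\rangle$.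
   Context: $J\subseteq I$ is a reduction of $I$ if $I^{m+1}=JI^m$ for some $m\ge0$; $\mathrm{r}_J(I)$ is the least such $m$; $I^0=R$. With $J_0=0$, $J_i=(x_1,\ldots,x_i)$, the sequence $x_1,\ldots,x_s$ is a $d$-sequence if $(J_i:x_{i+1}x_j)=(J_i:x_j)$ for all $0\leq i\leq s-1$, $j\geq i+1$. $V=R[X_1,\ldots,X_s,Y]$ graded by total degree, $V_n$ its degree-$n$ part; $\varphi:V\to\mathbf{R}(I)=\bigoplus_{n\ge0}I^nt^n$ sends $X_i\mapsto x_it$, $Y\mapsto yt$; $Q=\ker\varphi=\bigoplus_{n\ge1}Q_n$; $Q\langle n\rangle$ is the ideal generated by homogeneous elements of $Q$ of degree at most $n$; $\mathrm{rt}(I)$ is the least $N\ge1$ with $Q=Q\langle N\rangle$. *)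

From HB Require Import structures.
From mathcomp Require Import all_boot all_order all_algebra.
From mathcomp Require Import mpoly.
Set Implicit Arguments. Unset Strict Implicit. Unset Printing Implicit Defensive.
Import GRing.Theory.
Local Open Scope ring_scope.

Section Ideals.
Variable R : comNzRingType.

Definition is_ideal (I : R -> Prop) : Prop :=
  [/\ I 0, (forall a b, I a -> I b -> I (a + b)) & (forall a b, I b -> I (a * b))].

Definition idealgen (S : R -> Prop) : R -> Prop :=
  fun a => exists (n : nat) (c g : 'I_n -> R),
      (forall i, S (g i)) /\ a = \sum_(i < n) c i * g i.

Definition eqI (A B : R -> Prop) : Prop := forall a, A a <-> B a.
Definition subI (A B : R -> Prop) : Prop := forall a, A a -> B a.

Definition interI (A B : R -> Prop) : R -> Prop := fun a => A a /\ B a.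

Definition prodI (A B : R -> Prop) : R -> Prop :=
  idealgen (fun a => exists u v, A u /\ B v /\ a = u * v).

Fixpoint powI (I : R -> Prop) (n : nat) : R -> Prop :=
  match n with
  | 0 => fun _ => True
  | n'.+1 => prodI I (powI I n')
  end.

Definition colonI (A : R -> Prop) (b : R) : R -> Prop := fun a => A (a * b).

Definition maximal_ideal (m : R -> Prop) : Prop :=
  [/\ is_ideal m, ~ m 1 &
      forall J, is_ideal J -> subI m J -> eqI J m \/ J 1].

Definition local_ring : Prop :=
  exists m, maximal_ideal m /\ forall m', maximal_ideal m' -> eqI m' m.

Definition noetherian_ring : Prop :=
  forall I, is_ideal I ->
    exists (n : nat) (g : 'I_n -> R), eqI I (idealgen (fun a => exists i, a = g i)).

(* ideal generated by x_0, ..., x_{i-1} (the paper's J_i = (x_1,...,x_i)) *)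
Definition Jseq (x : nat -> R) (i : nat) : R -> Prop :=
  idealgen (fun a => exists2 k, (k < i)%N & a = x k).

Definition Igen (x : nat -> R) (s : nat) (y : R) : R -> Prop :=
  idealgen (fun a => (exists2 k, (k < s)%N & a = x k) \/ a = y).

Definition minimal_gens (x : nat -> R) (s : nat) (y : R) : Prop :=
  forall (n : nat) (g : 'I_n -> R),
    eqI (Igen x s y) (idealgen (fun a => exists i, a = g i)) -> (s.+1 <= n)%N.

Definition is_reduction (J I : R -> Prop) : Prop :=
  subI J I /\ exists m, eqI (powI I m.+1) (prodI J (powI I m)).

Definition reduction_number (J I : R -> Prop) (r : nat) : Prop :=
  eqI (powI I r.+1) (prodI J (powI I r)) /\
  forall m, (m < r)%N -> ~ eqI (powI I m.+1) (prodI J (powI I m)).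

(* d-sequence (paper indices shifted by one: x_{i+1} is [x i]) :
   (J_i : x_{i+1} x_j) = (J_i : x_j) for 0 <= i <= s-1, i+1 <= j <= s *)
Definition d_sequence (x : nat -> R) (s : nat) : Prop :=
  forall i j, (i <= j)%N -> (j < s)%N ->
    eqI (colonI (Jseq x i) (x i * x j)) (colonI (Jseq x i) (x j)).

Definition R_sequence (x : nat -> R) (s : nat) : Prop :=
  (forall i, (i < s)%N -> forall b, Jseq x i (b * x i) -> Jseq x i b) /\
  ~ Jseq x s 1.

End Ideals.

(* The polynomial ring V = R[X_1,...,X_s,Y]: variables 'X_i (i < s) are X_{i+1},
   the last variable 'X_(ord_max) is Y. *)
Section Rees.
Variable R : comNzRingType.
Variables (s : nat) (x : nat -> R) (y : R).

Definition Vvar (i : 'I_s) : {mpoly R[s.+1]} := 'X_(widen_ord (leqnSn s) i).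
Definition Yvar : {mpoly R[s.+1]} := 'X_(@ord_max s).

Definition gen_val (i : 'I_s.+1) : R := if (i < s)%N then x i else y.

(* phi : V -> R(I) ⊆ R[t], X_i |-> x_i t, Y |-> y t *)
Definition phi (F : {mpoly R[s.+1]}) : {poly R} :=
  mmap (@polyC R) (fun i => (gen_val i)%:P * 'X) F.

Definition inQ (F : {mpoly R[s.+1]}) : Prop := phi F = 0.

Definition Qgen (n : nat) : {mpoly R[s.+1]} -> Prop :=
  idealgen (fun F => exists2 d, (d <= n)%N & F \is d.-homog /\ inQ F).

Definition is_rt (N : nat) : Prop :=
  [/\ (1 <= N)%N, eqI inQ (Qgen N) &
      forall M, (1 <= M)%N -> (M < N)%N -> ~ eqI inQ (Qgen M)].

End Rees.

Arguments Yvar {R} s.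
Arguments phi {R} s x y F.
Arguments inQ {R} s x y F.
Arguments Qgen {R} s x y n _.
Arguments is_rt {R} s x y N.
Arguments Vvar {R s} i.

From HB Require Import structures.
From mathcomp Require Import all_boot all_order all_algebra.
From mathcomp Require Import mpoly.
From mathcomp Require Import ring zify.
From Stdlib Require Import Classical.
Set Implicit Arguments. Unset Strict Implicit. Unset Printing Implicit Defensive.
Import GRing.Theory.
Local Open Scope ring_scope.

(* Let Q be the kernel of phi : R[X_1..X_s,Y] -> R[It].  A form of degree n+1
   can be written c Y^(n+1) + sum_j X_j H_j.  Since y^(r+1) lies in J I^r, Q
   contains a form Y^(r+1) - sum_j X_j F_j; subtracting a multiple of it, a form
   of Q of degree n+2 > r+1 becomes a linear syzygy sum_j X_j G_j.  Such
   syzygies are generated in degree n+1: this uses that (J_k : x_k) cap I^(n+1)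
   is contained in J_k, which follows from the d-sequence property as I^(n+1)
   is contained in J, and
   J_k cap I^(n+2) = J_k I^(n+1), which propagates upwards from (b).  Hence
   Q = Q<r+1>.  Under (c) and (d) the same reduction already works in degree
   r+1, giving Q = (form) + Q<r>.  Finally the form is not in Q<r>: sending X_j
   to 0 and Y to t maps Q<r> into polynomials whose coefficients a satisfy
   a y^r in J I^(r-1), and the form to t^(r+1), whereas y^r is not in J I^(r-1)
   because r = r_J(I). *)

Section Ideals.
Variable R : comNzRingType.
Implicit Types (S T : R -> Prop) (a b : R).

Lemma idealD T a b : is_ideal T -> T a -> T b -> T (a + b).
Proof. by case=> _ + _; apply. Qed.

Lemma idealM T a b : is_ideal T -> T b -> T (a * b).
Proof. by case=> _ _; apply. Qed.

Lemma idealMr T a b : is_ideal T -> T a -> T (a * b).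
Proof. by move=> hT Ta; rewrite mulrC; apply: idealM. Qed.

Lemma idealN T a : is_ideal T -> T a -> T (- a).
Proof. by move=> hT Ta; rewrite -mulN1r; apply: idealM. Qed.

Lemma idealB T a b : is_ideal T -> T a -> T b -> T (a - b).
Proof. by move=> hT Ta Tb; apply: idealD => //; apply: idealN. Qed.

Lemma ideal_sum T (I : finType) (F : I -> R) :
  is_ideal T -> (forall i, T (F i)) -> T (\sum_i F i).
Proof. by move=> hT TF; elim/big_rec: _ => [|i a _]; [case: hT | apply: idealD]. Qed.

Lemma mem_idealgen S a : S a -> idealgen S a.
Proof.
by move=> Sa; exists 1%N, (fun=> 1), (fun=> a); rewrite big_ord1 mul1r.
Qed.

Lemma idealgen_ideal S : is_ideal (idealgen S).
Proof.
split.
- by exists 0%N, (fun=> 0), (fun=> 0); split; [case | rewrite big_ord0].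
- move=> _ _ [n [c [g [Sg ->]]]] [m [c' [g' [Sg' ->]]]].
  exists (n + m)%N, (fun i => match split i with inl j => c j | inr j => c' j end),
    (fun i => match split i with inl j => g j | inr j => g' j end); split.
    by move=> i; case: (split i).
  rewrite big_split_ord /=; congr (_ + _); apply: eq_bigr => i _.
    by rewrite (unsplitK (inl i)).
  by rewrite (unsplitK (inr i)).
- move=> a _ [n [c [g [Sg ->]]]]; exists n, (fun i => a * c i), g; split => //.
  by rewrite mulr_sumr; apply: eq_bigr => i _; rewrite mulrA.
Qed.

Lemma idealgen_min S T : is_ideal T -> subI S T -> subI (idealgen S) T.
Proof.
move=> hT ST _ [n [c [g [Sg ->]]]].
by apply: (ideal_sum hT) => i; apply: (idealM _ hT (ST _ (Sg i))).
Qed.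

End Ideals.

Lemma downward_ind (P : nat -> Prop) i n : (i <= n)%N ->
  (forall m, (i <= m < n)%N -> P m.+1 -> P m) -> P n -> P i.
Proof.
elim: n => [|n IH]; first by rewrite leqn0 => /eqP ->.
rewrite leq_eqVlt => /orP[/eqP -> // | ]; rewrite ltnS => le_in step Pn.
apply: IH => // [m /andP[im mn]|]; first by apply: step; rewrite im ltnS ltnW.
by apply: (step n) => //; rewrite le_in ltnSn.
Qed.

Lemma nat_finite_choice (T : Type) (P : nat -> T -> Prop) k (t0 : T) :
  (forall j, (j < k)%N -> exists v, P j v) ->
  exists f : nat -> T, forall j, (j < k)%N -> P j (f j).
Proof.
elim: k => [|k IH] H; first by exists (fun=> t0).
have [f Pf] := IH (fun j jk => H j (ltnW jk)).
have [v Pv] := H k (ltnSn k).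
exists (fun j => if j == k then v else f j) => j; rewrite ltnS leq_eqVlt.
by case: eqP => [-> //| _ /= jk]; apply: Pf.
Qed.

Lemma ex_minimal_pos (P : nat -> Prop) K : (exists M, (1 <= M <= K)%N /\ P M) ->
  exists N, [/\ (1 <= N <= K)%N, P N & forall M, (1 <= M)%N -> (M < N)%N -> ~ P M].
Proof.
elim: K => [|K IH] [M [MK PM]]; first by case: M MK {PM}.
have [/IH [N [NK PN minN]]|noPK] := classic (exists M, (1 <= M <= K)%N /\ P M).
  by exists N; split=> //; case/andP: NK => -> /= /leqW.
have eM : M = K.+1.
  case/andP: MK => M1; rewrite leq_eqVlt ltnS => /orP[/eqP // | MleK].
  by case: noPK; exists M; rewrite M1.
subst M; exists K.+1; split=> // M' M'1 M'K PM'.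
by apply: noPK; exists M'; rewrite M'1 -ltnS.
Qed.

Section Generators.
Variable R : comNzRingType.
Variables (s : nat) (x : nat -> R) (y : R).
Local Notation I := (Igen x s y).
Local Notation J := (Jseq x).

Definition Jcomb k (B : R -> Prop) (a : R) :=
  exists c : nat -> R, (forall j, B (c j)) /\ a = \sum_(j < k) x j * c j.

Lemma Jcomb_ideal k B : is_ideal B -> is_ideal (Jcomb k B).
Proof.
move=> hB; split.
- exists (fun=> 0); split; first by case: hB.
  by rewrite big1 // => j _; rewrite mulr0.
- move=> _ _ [c [Bc ->]] [c' [Bc' ->]]; exists (fun j => c j + c' j); split.
    by move=> j; apply: idealD.
  by rewrite -big_split; apply: eq_bigr => j _; rewrite mulrDr.
- move=> a _ [c [Bc ->]]; exists (fun j => a * c j); split.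
    by move=> j; apply: idealM.
  by rewrite mulr_sumr; apply: eq_bigr => j _; rewrite mulrCA.
Qed.

Lemma Jseq_ideal k : is_ideal (J k).
Proof. exact: idealgen_ideal. Qed.

Lemma JseqP k a : J k a <-> Jcomb k (fun=> True) a.
Proof.
split.
- apply: idealgen_min; first exact: Jcomb_ideal.
  move=> _ [j jk ->]; exists (fun i => (i == j)%:R); split=> //.
  rewrite (bigD1 (Ordinal jk)) //= eqxx mulr1 big1 ?addr0 // => i.
  by rewrite -val_eqE /= => /negbTE ->; rewrite mulr0.
- move=> [c [_ ->]]; apply: (ideal_sum (Jseq_ideal k)) => j.
  by rewrite mulrC; apply: idealM (Jseq_ideal k) _; apply: mem_idealgen; exists j.
Qed.

Lemma Jcomb_Jseq k B a : Jcomb k B a -> J k a.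
Proof. by move=> [c [_ ->]]; apply/JseqP; exists c. Qed.

Lemma prodJP k B : is_ideal B -> forall a, prodI (J k) B a <-> Jcomb k B a.
Proof.
move=> hB a; split.
- apply: idealgen_min; first exact: Jcomb_ideal.
  move=> _ [u [v [/JseqP [c [_ ->]] [Bv ->]]]].
  exists (fun j => c j * v); split; first by move=> j; apply: idealM.
  by rewrite mulr_suml; apply: eq_bigr => j _; rewrite mulrA.
- move=> [c [Bc ->]]; apply: (ideal_sum (idealgen_ideal _)) => j.
  apply: mem_idealgen; exists (x j), (c j); do !split=> //.
  by apply: mem_idealgen; exists j.
Qed.

Lemma Jseq_mono i k a : (i <= k)%N -> J i a -> J k a.
Proof.
move=> ik; apply: idealgen_min; first exact: Jseq_ideal.
by move=> _ [j ji ->]; apply: mem_idealgen; exists j => //; apply: leq_trans ik.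
Qed.

Lemma Jseq0 a : J 0 a -> a = 0.
Proof. by move/JseqP=> [c [_ ->]]; rewrite big_ord0. Qed.

Lemma Igen_x j : (j < s)%N -> I (x j).
Proof. by move=> js; apply: mem_idealgen; left; exists j. Qed.

Lemma Igen_y : I y.
Proof. by apply: mem_idealgen; right. Qed.

Lemma Jseq_sub_Igen : subI (J s) I.
Proof. by apply: idealgen_min; [exact: idealgen_ideal | move=> _ [j js ->]; apply: Igen_x]. Qed.

Lemma powI_ideal n : is_ideal (powI I n).
Proof. by case: n => [|n] /=; [split | exact: idealgen_ideal]. Qed.

Lemma powI_mul n u v : I u -> powI I n v -> powI I n.+1 (u * v).
Proof. by move=> Iu Iv; apply: mem_idealgen; exists u, v. Qed.

Lemma powI_y n : powI I n (y ^+ n).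
Proof. by elim: n => [|n IH] //=; rewrite exprS; apply: powI_mul Igen_y IH. Qed.

Lemma Jcomb_mul_y n k b :
  Jcomb s (powI I n) b -> Jcomb s (powI I (n + k)) (b * y ^+ k).
Proof.
elim: k => [|k IH]; first by rewrite addn0 expr0 mulr1.
move=> /IH [c [Ic Eb]]; exists (fun j => y * c j); split.
  by move=> j; rewrite addnS; apply: powI_mul Igen_y _.
by rewrite exprS mulrCA Eb mulr_sumr; apply: eq_bigr => j _; rewrite mulrCA.
Qed.

Lemma dseq_colon_step i m b : d_sequence x s -> (i <= m)%N -> (m < s)%N ->
  J i (b * x i) -> J m.+1 b -> J m b.
Proof.
move=> ds im ms Jbi /JseqP [c [_ Eb]].
rewrite big_ord_recr /= in Eb.
set b' := \sum_(j < m) _ in Eb.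
have Jb' : J m b' by apply/JseqP; exists c.
have Jbm : J m (b * x m).
  apply: (Jseq_mono im); apply/(ds i m im ms).
  by rewrite /colonI mulrA; apply: idealMr (Jseq_ideal i) Jbi.
have Jcmm : J m (c m * (x m * x m)).
  have -> : c m * (x m * x m) = b * x m - b' * x m.
    by rewrite Eb mulrDl addrC addKr mulrCA mulrA.
  by apply: idealB (Jseq_ideal m) Jbm _; apply: idealMr (Jseq_ideal m) Jb'.
have Jcm : J m (x m * c m) by rewrite mulrC; apply/(ds m m (leqnn m) ms).
by rewrite Eb; apply: idealD (Jseq_ideal m) Jb' Jcm.
Qed.

Lemma dseq_colon i b : d_sequence x s -> (i < s)%N ->
  J i (b * x i) -> J s b -> J i b.
Proof.
move=> ds lis Jbi; apply: (downward_ind (P := J^~ b) (ltnW lis)).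
by move=> m /andP[im ms]; exact: dseq_colon_step ds im ms Jbi.
Qed.

Lemma reduction_powS r N : eqI (powI I r.+1) (prodI (J s) (powI I r)) ->
  (r <= N)%N -> subI (powI I N.+1) (Jcomb s (powI I N)).
Proof.
move=> red; have base : subI (powI I r.+1) (Jcomb s (powI I r)).
  by move=> a /red /prodJP; apply; apply: powI_ideal.
elim: N => [|N IH]; rewrite leq_eqVlt => /orP[/eqP <- // | ]; first by rewrite ltn0.
rewrite ltnS => /IH {}IH; apply: idealgen_min; first exact/Jcomb_ideal/powI_ideal.
move=> _ [u [v [Iu [/IH [c [Ic ->]] ->]]]].
exists (fun j => u * c j); split; first by move=> j; apply: powI_mul.
by rewrite mulr_sumr; apply: eq_bigr => j _; rewrite mulrCA.
Qed.

Definition Jcolon_pow N :=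
  forall k g, (k < s)%N -> powI I N g -> J k (g * x k) -> J k g.

Definition Jinter_pow M :=
  forall i a, (i < s)%N -> J i a -> powI I M.+1 a -> Jcomb i (powI I M) a.

Lemma Jcolon_pow_gt r N : d_sequence x s ->
  eqI (powI I r.+1) (prodI (J s) (powI I r)) -> (r < N)%N -> Jcolon_pow N.
Proof.
move=> ds red; case: N => [|N] // rN k g ks Ng Jg.
exact: dseq_colon ds ks Jg (Jcomb_Jseq (reduction_powS red rN Ng)).
Qed.

Lemma Jinter_powS M : Jcolon_pow M.+1 -> Jinter_pow M ->
  subI (powI I M.+2) (Jcomb s (powI I M.+1)) -> Jinter_pow M.+1.
Proof.
move=> colon inter red i a lis Ja Ia.
apply: (downward_ind (P := fun k => Jcomb k (powI I M.+1) a) (ltnW lis) _ (red a Ia)).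
move=> k /andP[ik ks] [c [Ic Ea]]; rewrite big_ord_recr /= in Ea.
have Jsum : J k (\sum_(j < k) x j * c j) by apply/JseqP; exists c.
have Jck : J k (c k * x k).
  rewrite mulrC (_ : x k * c k = a - \sum_(j < k) x j * c j).
    by apply: idealB (Jseq_ideal k) _ Jsum; apply: Jseq_mono ik Ja.
  by rewrite Ea addrAC subrr add0r.
have [e [Ie Ee]] := inter k (c k) ks (colon k (c k) ks (Ic k) Jck) (Ic k).
exists (fun j => c j + x k * e j); split.
  by move=> j; apply: idealD (powI_ideal _) (Ic j) _; apply: powI_mul (Igen_x ks) (Ie j).
rewrite Ea Ee mulr_sumr -big_split /=; apply: eq_bigr => j _.
by rewrite mulrDr mulrCA.
Qed.

Lemma syzygy_last_coef N k (g : nat -> R) :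
  Jcolon_pow N.+1 -> Jinter_pow N -> (k < s)%N -> powI I N.+1 (g k) ->
  \sum_(j < k.+1) x j * g j = 0 -> Jcomb k (powI I N) (g k).
Proof.
move=> colon inter ks Ig; rewrite big_ord_recr /= addrC => /eqP; rewrite addr_eq0 => /eqP E.
apply: inter => //; apply: colon => //.
rewrite mulrC E; apply: idealN (Jseq_ideal k) _.
by apply/JseqP; exists g.
Qed.

Lemma Jinter_pow_of_eq M :
  (forall i, (1 <= i <= s.-1)%N ->
     eqI (interI (J i) (powI I M.+1)) (prodI (J i) (powI I M))) ->
  Jinter_pow M.
Proof.
move=> hyp [|i] a lis Ja Ia.
  by rewrite (Jseq0 Ja); case: (Jcomb_ideal 0 (powI_ideal M)).
apply/prodJP; first exact: powI_ideal.
by apply/hyp; [lia | split].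
Qed.

Lemma Jinter_pow_ge r N : eqI (powI I r.+1) (prodI (J s) (powI I r)) ->
  d_sequence x s -> Jinter_pow r -> (r <= N)%N -> Jinter_pow N.
Proof.
move=> red ds inter_r; elim: N => [|N IH].
  by rewrite leqn0 => /eqP r0; rewrite -r0.
rewrite leq_eqVlt => /orP[/eqP <- // | ]; rewrite ltnS => rN.
apply: Jinter_powS (IH rN) (reduction_powS red (leqW rN)).
by apply: Jcolon_pow_gt ds red _; rewrite ltnS.
Qed.

Lemma reduction_number_gt0 r : minimal_gens x s y ->
  reduction_number (J s) I r -> (0 < r)%N.
Proof.
move=> mingens [red _]; case: r red => // red.
have := mingens s (fun i : 'I_s => x i); rewrite ltnn; apply=> a; split.
- move=> Ia; have /red /(prodJP _ (powI_ideal 0)) /Jcomb_Jseq : powI I 1 a.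
    by rewrite -[a]mulr1; apply: powI_mul.
  apply: idealgen_min; first exact: idealgen_ideal.
  by move=> _ [j js ->]; apply: mem_idealgen; exists (Ordinal js).
- apply: idealgen_min; first exact: idealgen_ideal.
  by move=> _ [i ->]; apply: Igen_x.
Qed.

End Generators.

Lemma coefCXn (R : nzRingType) (b : R) e d :
  (b%:P * 'X^e)`_d = if d == e then b else 0.
Proof. by rewrite coefCM coefXn; case: eqP; rewrite ?mulr1 ?mulr0. Qed.

Section Presentation.
Variable R : comNzRingType.
Variables (s : nat) (x : nat -> R) (y : R).
Local Notation I := (Igen x s y).
Local Notation V := {mpoly R[s.+1]}.
Local Notation ph := (phi s x y).
Local Notation Y := (@Yvar R s).
Local Notation inQ := (inQ s x y).
Local Notation Qgen := (Qgen s x y).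

Lemma phi0 : ph 0 = 0. Proof. exact: raddf0. Qed.
Lemma phiD G G' : ph (G + G') = ph G + ph G'. Proof. exact: raddfD. Qed.
Lemma phiB G G' : ph (G - G') = ph G - ph G'. Proof. exact: raddfB. Qed.
Lemma phiM G G' : ph (G * G') = ph G * ph G'. Proof. exact: rmorphM. Qed.
Lemma phiX G k : ph (G ^+ k) = ph G ^+ k. Proof. exact: rmorphXn. Qed.
Lemma phi_sum k (E : 'I_k -> V) : ph (\sum_(j < k) E j) = \sum_(j < k) ph (E j).
Proof. exact: raddf_sum. Qed.

(* [Xs j] is the variable X_(j+1) of the paper; it is only meaningful for [j < s]. *)
Definition Xs (j : nat) : V := 'X_(inord j).

Lemma Vvar_Xs (i : 'I_s) : Vvar i = Xs i.
Proof.
rewrite /Vvar /Xs (_ : widen_ord _ i = inord i) //.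
by apply: val_inj; rewrite /= inordK // ltnS ltnW.
Qed.

Lemma Xs_homog j : Xs j \is 1.-homog.
Proof. by rewrite dhomogX; apply/eqP; apply: mdeg1. Qed.

Lemma Y_homog : Y \is 1.-homog.
Proof. by rewrite dhomogX; apply/eqP; apply: mdeg1. Qed.

Lemma Xs_mul_homog j N (E : V) : E \is N.-homog -> Xs j * E \is N.+1.-homog.
Proof. by move/(dhomogM (Xs_homog j)); rewrite add1n. Qed.

Lemma phiC c : ph c%:MP = c%:P.
Proof. exact: mmapC. Qed.

Lemma phiZ c G : ph (c *: G) = c%:P * ph G.
Proof. exact: mmapZ. Qed.

Lemma phiXs j : (j < s)%N -> ph (Xs j) = (x j)%:P * 'X.
Proof. by move=> js; rewrite /phi /Xs mmapX mmap1U /gen_val inordK ?js // ltnS ltnW. Qed.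

Lemma phiY : ph Y = y%:P * 'X.
Proof. by rewrite /phi /Yvar mmapX mmap1U /gen_val /= ltnn. Qed.

Lemma phi_Xs_mul j N (E : V) (e : R) : (j < s)%N -> ph E = e%:P * 'X^N ->
  ph (Xs j * E) = (x j * e)%:P * 'X^(N.+1).
Proof. by move=> js hE; rewrite phiM phiXs // hE polyCM exprS; ring. Qed.

Lemma phi_Xsum k N (E : nat -> V) (e : nat -> R) : (k <= s)%N ->
  (forall j, (j < k)%N -> ph (E j) = (e j)%:P * 'X^N) ->
  ph (\sum_(j < k) Xs j * E j) = (\sum_(j < k) x j * e j)%:P * 'X^(N.+1).
Proof.
move=> ks hE; rewrite phi_sum rmorph_sum /= mulr_suml.
by apply: eq_bigr => j _; apply: phi_Xs_mul; [apply: leq_trans ks | apply: hE].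
Qed.

Definition phi_coef n G := (ph G)`_n.

Lemma phi_coefE n G b : ph G = b%:P * 'X^n -> phi_coef n G = b.
Proof. by rewrite /phi_coef => ->; rewrite coefCXn eqxx. Qed.

Definition Ydecomp n G := exists c (H : nat -> V),
  (forall j, H j \is n.-homog) /\ G = c *: Y ^+ n.+1 + \sum_(j < s) Xs j * H j.

Lemma Ydecomp0 n : Ydecomp n 0.
Proof.
exists 0, (fun=> 0); split=> [j|]; first exact: dhomog0.
by rewrite scale0r add0r big1 // => j _; rewrite mulr0.
Qed.

Lemma YdecompD n G G' : Ydecomp n G -> Ydecomp n G' -> Ydecomp n (G + G').
Proof.
move=> [c [H [hH ->]]] [c' [H' [hH' ->]]].
exists (c + c'), (fun j => H j + H' j); split=> [j|]; first exact: dhomogD.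
rewrite scalerDl; under [X in _ = _ + X]eq_bigr do rewrite mulrDr.
by rewrite big_split /= addrACA.
Qed.

Lemma YdecompZ n a G : Ydecomp n G -> Ydecomp n (a *: G).
Proof.
move=> [c [H [hH ->]]]; exists (a * c), (fun j => a *: H j); split=> [j|].
  exact: dhomogZ.
rewrite scalerDr scalerA scaler_sumr; congr (_ + _); apply: eq_bigr => j _.
by rewrite scalerAr.
Qed.

Lemma Ydecomp_monomial n (m : 'X_{1..s.+1}) : mdeg m = n.+1 -> Ydecomp n 'X_[m].
Proof.
move=> dm.
have [/existsP [i mi] | ] := boolP [exists i : 'I_s, m (widen_ord (leqnSn s) i) != 0%N].
  set w := widen_ord (leqnSn s) i in mi.
  have Um : (U_(w) <= m)%MM by rewrite lep1mP.
  exists 0, (fun j => if j == i :> nat then 'X_[m - U_(w)] else 0); split.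
    move=> j; case: ifP => _; last exact: dhomog0.
    by rewrite dhomogX; apply/eqP; move: dm; rewrite -{1}(submK Um) mdegD mdeg1 addn1 => -[].
  rewrite scale0r add0r (bigD1 i) //= eqxx big1 ?addr0; last first.
    by move=> j; rewrite -val_eqE => /negbTE ->; rewrite mulr0.
  by rewrite -Vvar_Xs /Vvar -mpolyXD addmC submK.
rewrite negb_exists => /forallP m0.
have -> : m = (U_(@ord_max s) *+ n.+1)%MM.
  apply/mnmP => j; rewrite mulmnE mnm1E.
  case: (unliftP ord_max j) => [k ->|->].
    have -> : lift ord_max k = widen_ord (leqnSn s) k.
      by apply: val_inj; rewrite /= /bump leqNgt ltn_ord.
    move/negPn/eqP: (m0 k) ->; rewrite -val_eqE /=.
    by rewrite eq_sym ltn_eqF.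
  rewrite eqxx mul1n -dm mdegE big_ord_recr /= big1 ?add0n // => k _.
  by apply/eqP/negPn/m0.
exists 1, (fun=> 0); split=> [j|]; first exact: dhomog0.
by rewrite scale1r big1 ?addr0 => [|j _]; rewrite ?mulr0 // /Yvar mpolyXn.
Qed.

Lemma homog_Ydecomp n G : G \is n.+1.-homog -> Ydecomp n G.
Proof.
move=> /dhomogP hG; rewrite (mpolyE G) big_seq.
elim/big_ind: _ => [|G1 G2|m hm]; [exact: Ydecomp0 | exact: YdecompD |].
by apply: YdecompZ; apply: Ydecomp_monomial; apply: hG.
Qed.

Lemma phi_Ydecomp n c (H : nat -> V) :
  (forall j, ph (H j) = (phi_coef n (H j))%:P * 'X^n) ->
  ph (c *: Y ^+ n.+1 + \sum_(j < s) Xs j * H j) =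
  (c * y ^+ n.+1 + \sum_(j < s) x j * phi_coef n (H j))%:P * 'X^(n.+1).
Proof.
move=> hH; rewrite phiD phiZ phiX phiY (phi_Xsum (leqnn s) (fun j _ => hH j)).
by rewrite rmorphD rmorphM rmorphXn /= mulrDl exprMn; congr (_ + _); ring.
Qed.

Lemma homog0_polyC (G : V) : G \is 0.-homog -> G = (G@_0)%:MP.
Proof.
move=> /dhomogP hG; apply: msize1_polyC; rewrite msizeE.
by apply/bigmax_leqP_seq => m /hG ->.
Qed.

Lemma phi_homog n G : G \is n.-homog ->
  ph G = (phi_coef n G)%:P * 'X^n /\ powI I n (phi_coef n G).
Proof.
elim: n G => [|n IH] G hG.
  by rewrite (homog0_polyC hG) /phi_coef phiC coefC expr0 mulr1.
have [c [H [hH EG]]] := homog_Ydecomp hG.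
have E := phi_Ydecomp c (fun j => (IH _ (hH j)).1); rewrite -EG in E.
rewrite (phi_coefE E); split=> //.
apply: idealD (powI_ideal _ _ _ _) _ _.
  by apply: idealM (powI_ideal _ _ _ _) (powI_y _ _ _ _).
apply: ideal_sum (powI_ideal _ _ _ _) _ => j.
by apply: powI_mul (Igen_x _ _ _) (IH _ (hH j)).2.
Qed.

Definition liftable n (a : R) := exists G : V, G \is n.-homog /\ ph G = a%:P * 'X^n.

Lemma liftable_ideal n : is_ideal (liftable n).
Proof.
split.
- by exists 0; rewrite phi0 mul0r dhomog0.
- move=> u v [G [hG EG]] [G' [hG' EG']]; exists (G + G').
  by rewrite dhomogD // phiD EG EG' rmorphD mulrDl.
- move=> a v [G [hG EG]]; exists (a *: G).
  by rewrite dhomogZ // phiZ EG rmorphM mulrA.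
Qed.

Lemma liftableM m n u v : liftable m u -> liftable n v -> liftable (m + n) (u * v).
Proof.
move=> [G [hG EG]] [G' [hG' EG']]; exists (G * G').
by rewrite dhomogM // phiM EG EG' rmorphM exprD; split=> //; ring.
Qed.

Lemma powI_lift n a : powI I n a -> liftable n a.
Proof.
elim: n a => [|n IH] a Ia.
  by exists a%:MP; rewrite phiC expr0 mulr1 -alg_mpolyC dhomogZ ?dhomog1.
apply: idealgen_min (liftable_ideal _) _ _ Ia => _ [u [v [Iu [/IH Lv ->]]]].
apply: (liftableM (m := 1%N)) Lv.
apply: idealgen_min (liftable_ideal _) _ _ Iu => _ [[j js ->] | ->].
  by exists (Xs j); rewrite Xs_homog phiXs.
by exists Y; rewrite Y_homog phiY.
Qed.

Lemma powIS_decomp n a : powI I n.+1 a ->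
  exists c, Jcomb x s (powI I n) (a - c * y ^+ n.+1).
Proof.
move=> /powI_lift [G [hG /phi_coefE <-]]; have [c [H [hH EG]]] := homog_Ydecomp hG.
have := phi_Ydecomp c (fun j => (phi_homog (hH j)).1); rewrite -EG => /phi_coefE ->.
exists c, (fun j => phi_coef n (H j)); split=> [j|]; first exact: (phi_homog (hH j)).2.
by rewrite addrAC subrr add0r.
Qed.

Lemma Q_ideal : is_ideal inQ.
Proof.
rewrite /inQ; split=> [|G G' QG QG'|G G' QG']; first exact: phi0.
  by rewrite phiD QG QG' addr0.
by rewrite phiM QG' mulr0.
Qed.

Lemma Qgen_sub_Q n : subI (Qgen n) inQ.
Proof. by apply: idealgen_min Q_ideal _ => G [d _ []]. Qed.

Lemma Qgen_homog d n G : (d <= n)%N -> G \is d.-homog -> inQ G -> Qgen n G.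
Proof. by move=> dn hG QG; apply: mem_idealgen; exists d. Qed.

Lemma Qgen_ideal n : is_ideal (Qgen n).
Proof. exact: idealgen_ideal. Qed.

(* Induction on k: the last coefficient lies in J_k I^N, and lifting it splits
   off X_k times a form of Q of degree N+1. *)
Lemma linear_syzygy_Qgen N : Jcolon_pow s x y N.+1 -> Jinter_pow s x y N ->
  forall k (G : nat -> V), (k <= s)%N ->
  (forall j, (j < k)%N -> G j \is N.+1.-homog) ->
  \sum_(j < k) x j * phi_coef N.+1 (G j) = 0 ->
  Qgen N.+1 (\sum_(j < k) Xs j * G j).
Proof.
move=> colon inter; elim=> [|k IH] G ks hG syz.
  by rewrite big_ord0; case: (Qgen_ideal N.+1).
have [phiGk Igk] := phi_homog (hG k (ltnSn k)).
have [e [Ie Ee]] :=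
  syzygy_last_coef (g := fun j => phi_coef N.+1 (G j)) colon inter ks Igk syz.
have [E hE] := nat_finite_choice
  (P := fun j E => E \is N.-homog /\ ph E = (e j)%:P * 'X^N) (k := k) 0
  (fun j _ => powI_lift (Ie j)).
pose G' j := G j + Xs k * E j.
have hG' j : (j < k)%N -> G' j \is N.+1.-homog.
  by move=> jk; rewrite rpredD ?hG ?Xs_mul_homog ?(hE j jk).1 // ltnW.
have hq : G k - \sum_(j < k) Xs j * E j \is N.+1.-homog.
  by rewrite rpredB ?hG // rpred_sum // => j _; rewrite Xs_mul_homog ?(hE j _).1.
have Qq : inQ (G k - \sum_(j < k) Xs j * E j).
  rewrite /inQ phiB phiGk (phi_Xsum (ltnW ks) (fun j jk => (hE j jk).2)).
  by rewrite -Ee subrr.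
have -> : \sum_(j < k.+1) Xs j * G j =
    Xs k * (G k - \sum_(j < k) Xs j * E j) + \sum_(j < k) Xs j * G' j.
  rewrite big_ord_recr /= mulrBr mulr_sumr /G'.
  under [X in _ = _ + X]eq_bigr do rewrite mulrDr mulrCA.
  by rewrite big_split /=; ring.
apply: idealD (Qgen_ideal _) (idealM _ (Qgen_ideal _) (Qgen_homog (leqnn _) hq Qq)) _.
apply: (IH G' (ltnW ks) hG').
apply: etrans syz; rewrite big_ord_recr /= Ee mulr_sumr -big_split /=.
apply: eq_bigr => j _.
have phiG'j : ph (G' j) = (phi_coef N.+1 (G j) + x k * e j)%:P * 'X^(N.+1).
  rewrite phiD (phi_homog (hG j (ltnW (ltn_ord j)))).1.
  by rewrite (phi_Xs_mul ks (hE j (ltn_ord j)).2) rmorphD mulrDl.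
by rewrite (phi_coefE phiG'j); ring.
Qed.

Lemma Q_sub_of_homog (T : V -> Prop) : is_ideal T ->
  (forall d G, G \is d.-homog -> inQ G -> T G) -> subI inQ T.
Proof.
move=> hT homogT F QF.
rewrite (pihomog_partitionE (leqnn (msize F))).
apply: (ideal_sum hT) => -[d dF] /=; apply: homogT (pihomogP _ _ _) _.
have E e : ph (pihomog mdeg e F) = (phi_coef e (pihomog mdeg e F))%:P * 'X^e.
  exact: (phi_homog (pihomogP mdeg e F)).1.
move: QF; rewrite /inQ {1}(pihomog_partitionE (leqnn (msize F))) phi_sum.
move=> /(congr1 (fun p : {poly R} => p`_d)); rewrite coef_sum coef0.
under eq_bigr do rewrite E coefCXn.
rewrite (bigD1 (Ordinal dF)) //= eqxx big1 ?addr0 => [coef_d|e]; last first.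
  by rewrite -val_eqE /= eq_sym => /negbTE ->.
by rewrite E coef_d mul0r.
Qed.

Definition red_form r (F : nat -> V) : V := Y ^+ r.+1 - \sum_(j < s) Xs j * F j.

Lemma red_formE r (F : nat -> V) :
  red_form r F = Y ^+ r.+1 - \sum_(i < s) Vvar i * F i.
Proof. by congr (_ - _); apply: eq_bigr => i _; rewrite Vvar_Xs. Qed.

Lemma exists_red_form r : eqI (powI I r.+1) (prodI (Jseq x s) (powI I r)) ->
  exists F : nat -> V, (forall j, (j < s)%N -> F j \is r.-homog) /\ inQ (red_form r F).
Proof.
move=> red; have [c [Ic Ey]] := reduction_powS red (leqnn r) (powI_y s x y r.+1).
have [F hF] := nat_finite_choice
  (P := fun j F => F \is r.-homog /\ ph F = (c j)%:P * 'X^r) (k := s) 0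
  (fun j _ => powI_lift (Ic j)).
exists F; split=> [j /hF [] //|].
rewrite /inQ /red_form phiB phiX phiY (phi_Xsum (leqnn s) (fun j js => (hF j js).2)).
by rewrite exprMn -rmorphXn /= -Ey subrr.
Qed.

Section ReductionForm.
Variables (r : nat) (F : nat -> V).
Hypothesis F_homog : forall j, (j < s)%N -> F j \is r.-homog.
Hypothesis Q_form : inQ (red_form r F).
Local Notation form := (red_form r F).

Lemma red_form_homog : form \is r.+1.-homog.
Proof.
rewrite rpredB ?rpred_sum // => [|j _]; last exact/Xs_mul_homog/F_homog.
by have := dhomogMn r.+1 Y_homog; rewrite mul1n.
Qed.

Lemma Ydecomp_red_form n c (H : nat -> V) : (r <= n)%N ->
  c *: Y ^+ n.+1 + \sum_(j < s) Xs j * H j =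
  c *: Y ^+ (n - r) * form + \sum_(j < s) Xs j * (H j + c *: Y ^+ (n - r) * F j).
Proof.
move=> rn; rewrite /red_form mulrBr mulr_sumr.
under [X in _ = _ + X]eq_bigr do rewrite mulrDr mulrCA.
rewrite big_split /= -scalerAl -exprD addnS subnK //.
set A := \sum_(j < s) _; set B := \sum_(j < s) _; ring.
Qed.

Lemma homog_Q_mod_red_form n G : (r <= n.+1)%N ->
  Jcolon_pow s x y n.+1 -> Jinter_pow s x y n ->
  G \is n.+2.-homog -> inQ G -> exists A : V, Qgen n.+1 (G - A * form).
Proof.
move=> rn colon inter hG QG.
have [c [H [hH]]] := homog_Ydecomp hG; rewrite (Ydecomp_red_form c H rn) => EG.
set A := c *: _ in EG; exists A; rewrite EG addrAC subrr add0r.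
have hA : A \is (n.+1 - r).-homog.
  by apply: dhomogZ; have := dhomogMn (n.+1 - r) Y_homog; rewrite mul1n.
have hH' j : (j < s)%N -> H j + A * F j \is n.+1.-homog.
  by move=> js; rewrite rpredD //; have := dhomogM hA (F_homog js); rewrite subnK.
apply: (linear_syzygy_Qgen colon inter (leqnn s) hH').
have : inQ (\sum_(j < s) Xs j * (H j + A * F j)).
  by move: QG; rewrite /inQ EG phiD phiM Q_form mulr0 add0r.
rewrite /inQ (phi_Xsum (leqnn s) (fun j js => (phi_homog (hH' j js)).1)).
by move/(congr1 (fun p : {poly R} => p`_(n.+2))); rewrite coefCXn eqxx coef0.
Qed.

Lemma Q_sub_ideal_red_form (T : V -> Prop) b :
  is_ideal T -> T form -> (r <= b.+1)%N ->
  (forall n, (b <= n)%N -> Jcolon_pow s x y n.+1) ->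
  (forall n, (b <= n)%N -> Jinter_pow s x y n) ->
  (forall e G, (e <= b.+1)%N -> G \is e.-homog -> inQ G -> T G) ->
  subI inQ T.
Proof.
move=> hT Tform rb colon inter low; apply: (Q_sub_of_homog hT).
elim/ltn_ind=> d IH G hG QG; case: (leqP d b.+1) => [db | bd]; first exact: low hG QG.
have [n dn] : exists n, d = n.+2 by case: d {IH hG QG} bd => [|[|n]] //; exists n.
subst d; have bn : (b <= n)%N by lia.
have rn : (r <= n.+1)%N by lia.
have [A QA] := homog_Q_mod_red_form rn (colon n bn) (inter n bn) hG QG.
rewrite -(subrK (A * form) G); apply: (idealD hT _ (idealM _ hT Tform)).
apply: (idealgen_min hT) QA => E [e en [he Qe]].
exact: IH e (leq_ltn_trans en (ltnSn _)) _ he Qe.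
Qed.

End ReductionForm.

End Presentation.

Arguments Xs {R s} j.

Section Minimality.
Variable R : comNzRingType.
Variables (s : nat) (x : nat -> R) (y : R) (M : nat).
Local Notation I := (Igen x s y).
Local Notation V := {mpoly R[s.+1]}.
(* The substitution X_j |-> 0, Y |-> t. *)
Local Notation psi := (phi s (fun=> 0) (1 : R)).

Lemma psi_Xsum (H : nat -> V) : psi (\sum_(j < s) Xs j * H j) = 0.
Proof. by rewrite phi_sum big1 // => j _; rewrite phiM phiXs // polyC0 !mul0r. Qed.

Definition yred (a : R) := Jcomb x s (powI I M) (a * y ^+ M.+1).

Lemma yred_ideal : is_ideal yred.
Proof.
have hJ := Jcomb_ideal x s (powI_ideal s x y M).
split; rewrite /yred.
- by rewrite mul0r; case: hJ.
- by move=> a b ha hb; rewrite mulrDl; apply: idealD hJ ha hb.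
- by move=> a b hb; rewrite -mulrA; apply: idealM hJ hb.
Qed.

Definition psi_yred (G : V) := forall i, yred ((psi G)`_i).

Lemma psi_yred_ideal : is_ideal psi_yred.
Proof.
have hY := yred_ideal; split; rewrite /psi_yred.
- by move=> i; rewrite phi0 coef0; case: hY.
- by move=> G G' hG hG' i; rewrite phiD coefD; apply: idealD hY (hG i) (hG' i).
- move=> G G' hG' i; rewrite phiM coefM.
  by apply: (ideal_sum hY) => j; apply: idealM hY (hG' _).
Qed.

Lemma psi_yred_homog d G : (d <= M.+1)%N -> G \is d.-homog -> inQ s x y G -> psi_yred G.
Proof.
case: d => [|n] dM hG QG.
  suff -> : G = 0 by case: psi_yred_ideal.
  move: QG; rewrite /inQ (homog0_polyC hG) phiC => /eqP.
  by rewrite polyC_eq0 => /eqP ->; rewrite mpolyC0.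
have [c [H [hH EG]]] := homog_Ydecomp hG.
have := phi_Ydecomp c (fun j => (phi_homog x y (hH j)).1); rewrite -EG QG.
move/(congr1 (fun p : {poly R} => p`_n.+1)); rewrite coefCXn eqxx coef0 => Ec.
have yc : yred c.
  have : Jcomb x s (powI I n) (c * y ^+ n.+1).
    exists (fun j => - phi_coef x y n (H j)); split.
      by move=> j; apply: idealN (powI_ideal _ _ _ _) (phi_homog x y (hH j)).2.
    under eq_bigr do rewrite mulrN.
    by rewrite sumrN; apply/eqP; rewrite -addr_eq0 -Ec.
  by move/(Jcomb_mul_y (M - n)); rewrite -mulrA -exprD addSn !subnKC.
rewrite /psi_yred EG phiD psi_Xsum addr0 phiZ phiX phiY polyC1 mul1r => i.
by rewrite coefCXn; case: ifP => _ //; case: yred_ideal.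
Qed.

Lemma not_yred1 : reduction_number (Jseq x s) I M.+1 -> ~ yred 1.
Proof.
move=> [_ minr] y1; apply: (minr M (ltnSn M)) => a; split; last first.
  apply: idealgen_min; first exact: powI_ideal.
  by move=> _ [u [v [/Jseq_sub_Igen Iu [Iv ->]]]]; apply: powI_mul.
move=> /powIS_decomp [c Jc]; apply/prodJP; first exact: powI_ideal.
rewrite -(subrK (c * y ^+ M.+1) a).
apply: idealD (Jcomb_ideal _ _ (powI_ideal _ _ _ _)) Jc _.
by rewrite -[y ^+ _]mul1r; apply: idealM (Jcomb_ideal _ _ (powI_ideal _ _ _ _)) y1.
Qed.

Lemma red_form_notin_Qgen N (F : nat -> V) : reduction_number (Jseq x s) I M.+1 ->
  (N <= M.+1)%N -> ~ Qgen s x y N (red_form M.+1 F).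
Proof.
move=> rJ NM Qf; apply: (not_yred1 rJ).
have : psi_yred (red_form M.+1 F).
  apply: (idealgen_min psi_yred_ideal) Qf => G [d dN [hG QG]].
  exact: psi_yred_homog (leq_trans dN NM) hG QG.
by move/(_ M.+2); rewrite phiB psi_Xsum subr0 phiX phiY polyC1 mul1r coefXn eqxx.
Qed.

End Minimality.

Section RelationTypeBound.
Variable R : comNzRingType.
Variables (s : nat) (x : nat -> R) (y : R) (r : nat).
Local Notation I := (Igen x s y).
Hypothesis red : eqI (powI I r.+1) (prodI (Jseq x s) (powI I r)).
Hypothesis dseq : d_sequence x s.
Hypothesis hyp_b : forall i, (1 <= i <= s.-1)%N ->
  eqI (interI (Jseq x i) (powI I r.+1)) (prodI (Jseq x i) (powI I r)).

Lemma Q_eq_Qgen_red_succ : eqI (inQ s x y) (Qgen s x y r.+1).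
Proof.
have [F [F_homog Q_form]] := exists_red_form red.
move=> G; split; last exact: Qgen_sub_Q.
apply: (Q_sub_ideal_red_form F_homog Q_form (Qgen_ideal _ _ _ _)) => //.
- exact: Qgen_homog (leqnn _) (red_form_homog F_homog) Q_form.
- by move=> n rn; apply: Jcolon_pow_gt dseq red _; rewrite ltnS.
- by move=> n; apply: Jinter_pow_ge red dseq (Jinter_pow_of_eq hyp_b).
- by move=> e G' er; apply: Qgen_homog.
Qed.

End RelationTypeBound.

Section RelationTypeEquality.
Variable R : comNzRingType.
Variables (s : nat) (x : nat -> R) (y : R) (M : nat).
Local Notation I := (Igen x s y).
Hypothesis red : eqI (powI I M.+2) (prodI (Jseq x s) (powI I M.+1)).
Hypothesis dseq : d_sequence x s.
Hypothesis hyp_b : forall i, (1 <= i <= s.-1)%N ->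
  eqI (interI (Jseq x i) (powI I M.+2)) (prodI (Jseq x i) (powI I M.+1)).
Hypothesis rseq : R_sequence x s.
Hypothesis hyp_d : forall i, (1 <= i <= s.-1)%N ->
  eqI (interI (Jseq x i) (powI I M.+1)) (prodI (Jseq x i) (powI I M)).
Variable F : nat -> {mpoly R[s.+1]}.
Hypothesis F_homog : forall j, (j < s)%N -> F j \is M.+1.-homog.
Hypothesis Q_form : inQ s x y (red_form M.+1 F).

Lemma Q_eq_red_form_Qgen :
  eqI (inQ s x y) (idealgen (fun G => G = red_form M.+1 F \/ Qgen s x y M.+1 G)).
Proof.
move=> G; split; last first.
  by apply: (idealgen_min (Q_ideal s x y)) => E [-> // | /Qgen_sub_Q].
apply: (Q_sub_ideal_red_form F_homog Q_form (idealgen_ideal _) (b := M)) => //.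
- by apply: mem_idealgen; left.
- by move=> n _ k g ks _; apply: rseq.1.
- move=> n; rewrite leq_eqVlt => /orP[/eqP <- | Mn]; first exact: Jinter_pow_of_eq.
  by apply: Jinter_pow_ge red dseq (Jinter_pow_of_eq hyp_b) _.
- by move=> e G' eM hG' QG'; apply: mem_idealgen; right; apply: Qgen_homog hG' QG'.
Qed.

End RelationTypeEquality.

Theorem mainTheorem4 (R : comNzRingType) (s : nat) (x : nat -> R) (y : R) (r : nat) :
  noetherian_ring R -> local_ring R ->
  minimal_gens x s y ->
  is_reduction (Jseq x s) (Igen x s y) ->
  reduction_number (Jseq x s) (Igen x s y) r ->
  (* (a) *) d_sequence x s ->
  (* (b) *) (forall i, (1 <= i <= s.-1)%N ->
       eqI (interI (Jseq x i) (powI (Igen x s y) r.+1))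
           (prodI (Jseq x i) (powI (Igen x s y) r))) ->
  (exists N, is_rt s x y N /\ (N <= r.+1)%N) /\
  ((* (c) *) R_sequence x s ->
   (* (d) *) (forall i, (1 <= i <= s.-1)%N ->
       eqI (interI (Jseq x i) (powI (Igen x s y) r))
           (prodI (Jseq x i) (powI (Igen x s y) r.-1))) ->
   is_rt s x y r.+1 /\
   exists F : 'I_s -> {mpoly R[s.+1]},
     (forall i, F i \is r.-homog) /\
     inQ s x y (Yvar s ^+ r.+1 - \sum_(i < s) Vvar i * F i) /\
     eqI (inQ s x y)
         (idealgen (fun G => G = Yvar s ^+ r.+1 - \sum_(i < s) Vvar i * F i
                             \/ Qgen s x y r G))).
Proof.
move=> _ _ mingens _ rJ dseq hyp_b.
have QE := Q_eq_Qgen_red_succ rJ.1 dseq hyp_b.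
split.
  have [N [/andP[N1 Nr] QN minN]] := ex_minimal_pos
    (P := fun N => eqI (inQ s x y) (Qgen s x y N)) (ex_intro _ r.+1 (conj (leqnn _) QE)).
  by exists N.
move=> rseq hyp_d.
have [M rM] : exists M, r = M.+1.
  by exists r.-1; rewrite prednK // (reduction_number_gt0 mingens rJ).
subst r; have [F [F_homog Q_form]] := exists_red_form rJ.1.
split.
  split=> // N _; rewrite ltnS => NM QN.
  exact: red_form_notin_Qgen rJ NM (proj1 (QN _) Q_form).
exists (fun i : 'I_s => F i) => /=; rewrite -red_formE.
split=> [i|]; first exact: F_homog.
by split=> //; apply: (Q_eq_red_form_Qgen rJ.1 dseq hyp_b rseq hyp_d F_homog Q_form).
Qed.
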